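(* Let $P$ be a lattice-face $d$-simplex with vertices $v_1,\dots,v_{d+1}$. For every $\sigma\in\mathfrak S_d$ and every $1\le k\le d$, $z(\sigma,k)/z(\sigma,k-1)\in\mathbb Z$, where $z(\sigma,0)=1$.
   Context: Write $v_i=(x_{i,1},\dots,x_{i,d})$. For $1\le k\le d$, $X(\sigma,k)$ is the $(k+1)\times(k+1)$ matrix with rows $(1,x_{\sigma(r),1},\dots,x_{\sigma(r),k})$, $r=1,\dots,k$, and last row $(1,x_{d+1,1},\dots,x_{d+1,k})$; $Y(\sigma,k)$ is the $k\times k$ matrix with rows $(1,x_{\sigma(r),1},\dots,x_{\sigma(r),k-1})$, $r=1,\dots,k$; $z(\sigma,k)=\det X(\sigma,k)/\det Y(\sigma,k)$ (these determinants are nonzero for lattice-face simplices). Lattice-face polytopes are defined recursively, with $\pi:\mathbb R^d\to\mathbb R^{d-1}$ forgetting the last coordinate: a segment in $\mathbb R$ is lattice-face if its endpoints are integers; for $d\ge2$, a $d$-polytope with vertex set $V$ is lattice-face if for every $d$-element $U\subset V$: (a) $\pi(\mathrm{conv}(U))$ is a lattice-face polytope in $\mathbb R^{d-1}$, and (b) $\pi(H_U\cap\mathbb Z^d)=\mathbb Z^{d-1}$, $H_U$ the affine span of $U$. *)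

From HB Require Import structures.
From mathcomp Require Import all_boot all_order all_algebra all_fingroup.
Set Implicit Arguments. Unset Strict Implicit. Unset Printing Implicit Defensive.
Import Order.TTheory GRing.Theory Num.Theory.
Local Open Scope ring_scope.

Section LatticeFace.
Variable R : realFieldType.

Definition integral_pt n (x : 'rV[R]_n) : Prop :=
  forall i : 'I_n, exists z : int, x 0 i = z%:~R.

Definition in_aff n (S : seq 'rV[R]_n) (x : 'rV[R]_n) : Prop :=
  exists l : 'I_(size S) -> R,
    \sum_i l i = 1 /\ x = \sum_i l i *: S`_i.

Definition in_conv n (S : seq 'rV[R]_n) (x : 'rV[R]_n) : Prop :=
  exists l : 'I_(size S) -> R,
    (forall i, 0 <= l i) /\ \sum_i l i = 1 /\ x = \sum_i l i *: S`_i.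

Definition fulldim n (S : seq 'rV[R]_n) : Prop := forall x, in_aff S x.

Definition is_vert_set n (S W : seq 'rV[R]_n) : Prop :=
  uniq W /\ forall p, p \in W <-> (p \in S /\ ~ in_conv [seq q <- S | q != p] p).

Definition proj m (x : 'rV[R]_m.+1) : 'rV[R]_m :=
  \row_(i < m) x 0 (widen_ord (leqnSn m) i).

(* lattice-face polytopes, given by their vertex set, defined recursively *)
Fixpoint lattice_face (n : nat) : seq 'rV[R]_n -> Prop :=
  match n return seq 'rV[R]_n -> Prop with
  | 0 => fun _ => False
  | m.+1 => fun S =>
    if m == 0%N then
      size S = 2%N /\ uniq S /\ (forall p, p \in S -> integral_pt p)
    else
      fulldim S /\
      forall U : seq 'rV[R]_m.+1, uniq U -> size U = m.+1 -> {subset U <= S} ->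
        (* (a) pi(conv U) is lattice-face *)
        (forall W, is_vert_set (map (@proj m) U) W -> lattice_face W) /\
        (* (b) pi(H_U cap Z^d) = Z^(d-1) *)
        (forall y : 'rV[R]_m,
           (exists x, in_aff U x /\ integral_pt x /\ proj x = y) <-> integral_pt y)
  end.

(* x_{p,j} : j-th coordinate (1-based j, here passed 0-based as j) *)
Definition coord d (p : 'rV[R]_d) (j : nat) : R :=
  odflt 0 (omap (fun i : 'I_d => p 0 i) (insub j)).

(* v_{sigma(r+1)} for 0-based r < d *)
Definition vsig d (v : 'I_d.+1 -> 'rV[R]_d) (s : 'S_d) (r : nat) : 'rV[R]_d :=
  odflt 0 (omap (fun i : 'I_d => v (widen_ord (leqnSn d) (s i))) (insub r)).

Definition Xmat d (v : 'I_d.+1 -> 'rV[R]_d) (s : 'S_d) (k : nat) : 'M[R]_k.+1 :=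
  \matrix_(r < k.+1, c < k.+1)
    if c == 0 :> nat then 1
    else coord (if (r < k)%N then vsig v s r else v ord_max) c.-1.

Definition Ymat d (v : 'I_d.+1 -> 'rV[R]_d) (s : 'S_d) (k : nat) : 'M[R]_k :=
  \matrix_(r < k, c < k) if c == 0 :> nat then 1 else coord (vsig v s r) c.-1.

Definition zfun d (v : 'I_d.+1 -> 'rV[R]_d) (s : 'S_d) (k : nat) : R :=
  if k is 0 then 1 else \det (Xmat v s k) / \det (Ymat v s k).

Definition aff_indep d (v : 'I_d.+1 -> 'rV[R]_d) : Prop :=
  \det (\matrix_(i < d.+1, j < d.+1)
          if j == 0 :> nat then 1 else coord (v i) j.-1) != 0.

End LatticeFace.

From Pilot Require Import Defs.
From HB Require Import structures.
From mathcomp Require Import all_boot all_order all_algebra all_fingroup.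
From mathcomp Require Import zify ring.
Import Order.TTheory GRing.Theory Num.Theory.
Set Implicit Arguments. Unset Strict Implicit. Unset Printing Implicit Defensive.
Local Open Scope ring_scope.
Local Notation coord := Defs.coord.

(* Let p_0, ..., p_k be v_(s 1), ..., v_(s k), v_(d+1) truncated to their first k
   coordinates, so that X(s,k) is their matrix of homogeneous coordinates.  Descending
   from k = d, these points are affinely independent and lie among the vertices of a
   lattice-face k-polytope: condition (a) carries this to their projections, and
   Cramer's rule on X(s,k) with an equation of the facet opposite p_(k-1) shows that
   det X(s,k-1) <> 0.  Condition (b) makes every facet hyperplane the graph
   x_k = l(x_1, ..., x_(k-1)) of an integral affine function l.  For the facets
   x_k = l_H and x_k = l_G opposite p_k and p_(k-1), Cramer's rule gives z(s,k) = t with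
   t = (x_k - l_H)(v_(d+1)); the difference l_G - l_H vanishes at p_0, ..., p_(k-2),
   equals t at v_(d+1) and has an integer coefficient lam of x_(k-1), so Cramer's rule
   on X(s,k-1) gives lam * z(s,k-1) = t. *)

Section HomogeneousCoordinates.
Variable R : realFieldType.

Definition affine_form d n (b : nat -> R) (p : 'rV[R]_d) : R :=
  b 0%N + \sum_(j < n) b j.+1 * coord p j.

Definition int_coef (b : nat -> int) : nat -> R := fun j => (b j)%:~R.

Definition hom_mx n (f : 'I_n.+1 -> 'rV[R]_n) : 'M[R]_n.+1 :=
  \matrix_(r < n.+1, c < n.+1) if c == 0 :> nat then 1 else coord (f r) c.-1.

Definition trunc d k (p : 'rV[R]_d) : 'rV[R]_k := \row_(i < k) coord p i.

Lemma coordE n (p : 'rV[R]_n) (i : 'I_n) : coord p i = p 0 i.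
Proof. by rewrite /coord valK. Qed.

Lemma coord_trunc d k (p : 'rV[R]_d) j : (j < k)%N -> coord (trunc k p) j = coord p j.
Proof. by move=> hj; rewrite -[j]/(val (Ordinal hj)) coordE mxE. Qed.

Lemma trunc_id d (p : 'rV[R]_d) : trunc d p = p.
Proof. by apply/rowP => i; rewrite mxE coordE. Qed.

Lemma proj_trunc d k (p : 'rV[R]_d) : proj (trunc k.+1 p) = trunc k p.
Proof. by apply/rowP => i; rewrite /proj !mxE. Qed.

Lemma coord_proj m (p : 'rV[R]_m.+1) j : (j < m)%N -> coord (proj p) j = coord p j.
Proof. by move=> hj; rewrite -[j]/(val (Ordinal hj)) coordE mxE -coordE. Qed.

Lemma affine_form_trunc d n b (p : 'rV[R]_d) : affine_form n b (trunc n p) = affine_form n b p.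
Proof. by congr (_ + _); apply: eq_bigr => j _; rewrite coord_trunc. Qed.

Lemma affine_form_last0 d n b (p : 'rV[R]_d) :
  b n.+1 = 0 -> affine_form n.+1 b p = affine_form n b p.
Proof. by move=> h; rewrite /affine_form big_ord_recr /= h mul0r addr0. Qed.

Lemma affine_formB d n b1 b2 (p : 'rV[R]_d) :
  affine_form n (b1 \- b2) p = affine_form n b1 p - affine_form n b2 p.
Proof.
rewrite /affine_form; under eq_bigr do rewrite mulrBl.
by rewrite sumrB /=; ring.
Qed.

Lemma coord_sum n (I : finType) (a : I -> R) (q : I -> 'rV[R]_n) j :
  coord (\sum_i a i *: q i) j = \sum_i a i * coord (q i) j.
Proof.
rewrite /coord; case: insubP => [i _ _|_] /=.
  by rewrite summxE; apply: eq_bigr => k _; rewrite mxE.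
by rewrite big1 // => k _; rewrite mulr0.
Qed.

Lemma hom_mx_sum n (f : 'I_n.+1 -> 'rV[R]_n) (b : nat -> R) r :
  \sum_c hom_mx f r c * b c = affine_form n b (f r).
Proof.
rewrite big_ord_recl /affine_form !mxE /= mul1r; congr (_ + _).
by apply: eq_bigr => j _; rewrite !mxE /= mulrC.
Qed.

Lemma sign_addnn n : (-1) ^+ (n + n)%N = 1 :> R.
Proof. by rewrite -signr_odd addnn odd_double. Qed.

Lemma cramer_last n (M : 'M[R]_n.+1) (b : nat -> R) (i : 'I_n.+1) t :
  (forall r, \sum_c M r c * b c = if r == i then t else 0) ->
  b n * \det M = t * cofactor M i ord_max.
Proof.
move=> hM; pose bc : 'cV_n.+1 := \col_c b c.
have hMb : M *m bc = \col_r (if r == i then t else 0).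
  by apply/colP => r; rewrite !mxE -hM; apply: eq_bigr => c _; rewrite mxE.
have := congr1 (fun A : 'cV_n.+1 => A ord_max 0) (mulmxA (\adj M) M bc).
rewrite mul_adj_mx mul_scalar_mx hMb !mxE mulrC => <-.
rewrite (bigD1 i) //= big1 => [|r hr]; last by rewrite !mxE (negbTE hr) mulr0.
by rewrite !mxE eqxx addr0 mulrC.
Qed.

Lemma cofactor_hom_mx_max n (f : 'I_n.+2 -> 'rV[R]_n.+1) :
  cofactor (hom_mx f) ord_max ord_max = \det (hom_mx (fun j => proj (f (lift ord_max j)))).
Proof.
rewrite /cofactor sign_addnn mul1r; congr (\det _); apply/matrixP => r c.
rewrite !mxE lift_max; case: ifP => // hc.
by rewrite coord_proj //; move: (ltn_ord c) hc => /=; lia.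
Qed.

Lemma in_aff_mem n (U : seq 'rV[R]_n) u : u \in U -> in_aff U u.
Proof.
move=> hu; have hi : (index u U < size U)%N by rewrite index_mem.
exists (fun i => (i == Ordinal hi)%:R); split.
  by rewrite (bigD1 (Ordinal hi)) //= big1 => [|i /negbTE ->]; rewrite ?eqxx ?addr0.
rewrite (bigD1 (Ordinal hi)) //= big1 => [|i /negbTE ->]; last by rewrite scale0r.
by rewrite eqxx scale1r addr0 nth_index.
Qed.

Lemma det_hom_mx_in_aff n (U : seq 'rV[R]_n) (f : 'I_n.+1 -> 'rV[R]_n) :
  (size U <= n)%N -> (forall r, in_aff U (f r)) -> \det (hom_mx f) = 0.
Proof.
move=> hs hf; have [L hL] := fin_all_exists hf.
pose Lm : 'M[R]_(n.+1, size U) := \matrix_(r, i) L r i.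
pose Um : 'M[R]_(size U, n.+1) :=
  \matrix_(i, c) if c == 0 :> nat then 1 else coord (U`_i) c.-1.
have -> : hom_mx f = Lm *m Um.
  apply/matrixP => r c; rewrite !mxE; have [h1 h2] := hL r.
  under eq_bigr do rewrite !mxE.
  case: ifP => _; last by rewrite h2 coord_sum.
  by rewrite -{1}h1; apply: eq_bigr => i _; rewrite mulr1.
apply/eqP; apply: contraT; rewrite -unitfE -unitmxE -row_free_unit => /eqP hr.
have := leq_trans (mxrankM_maxl Lm Um) (rank_leq_col Lm).
by rewrite hr => /leq_trans /(_ hs); rewrite ltnn.
Qed.

Lemma hom_mx_inj n (f : 'I_n.+1 -> 'rV[R]_n) : \det (hom_mx f) != 0 -> injective f.
Proof.
move=> hd a b e; apply/eqP; apply: contraT => hab.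
by move: hd; rewrite (determinant_alternate hab) ?eqxx // => c; rewrite !mxE e.
Qed.

Lemma hom_mx_not_in_conv n (f : 'I_n.+1 -> 'rV[R]_n) : \det (hom_mx f) != 0 ->
  forall i, ~ in_conv [seq q <- [seq f j | j <- enum 'I_n.+1] | q != f i] (f i).
Proof.
move=> hd i [l [_ [hs hx]]]; move/eqP: hd; apply.
set S := [seq q <- _ | _] in l hs hx; apply: (@det_hom_mx_in_aff _ S).
  have := count_predC (fun q => q != f i) [seq f j | j <- enum 'I_n.+1].
  have : has (predC (fun q => q != f i)) [seq f j | j <- enum 'I_n.+1].
    by apply/hasP; exists (f i); [apply: map_f; rewrite mem_enum | rewrite /= eqxx].
  rewrite size_filter has_count size_map size_enum_ord.
  move: (count _ _) (count _ _) => a b; lia.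
move=> r; have [->|hr] := eqVneq (f r) (f i); first by exists l.
by apply: in_aff_mem; rewrite mem_filter hr map_f // mem_enum.
Qed.

(* The vertices of the standard simplex: [std_pt 0] is the origin, [std_pt i] is [e_i]. *)
Definition std_pt m (i : 'I_m.+1) : 'rV[R]_m := \row_(c < m) (c.+1 == i :> nat)%:R.

Lemma coord_std_pt m (i : 'I_m.+1) j :
  (j < m)%N -> coord (std_pt i) j = (j.+1 == i :> nat)%:R.
Proof. by move=> hj; rewrite -[j]/(val (Ordinal hj)) coordE mxE. Qed.

Lemma det_hom_mx_std_pt m : \det (hom_mx (@std_pt m)) = 1.
Proof.
have coord_std (c r : 'I_m.+1) :
    (c != 0 :> nat) -> coord (@std_pt m r) c.-1 = (c == r :> nat)%:R.
  by move: (ltn_ord c) => /= hc hc0; rewrite coord_std_pt ?prednK ?lt0n //; lia.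
rewrite det_trig.
  by rewrite big1 // => r _; rewrite mxE; case: ifP => // /negbT /coord_std ->; rewrite eqxx.
apply/is_trig_mxP => r c hrc; rewrite mxE; case: ifP => [/eqP c0|/negbT /coord_std ->].
  by move: hrc; rewrite c0 ltn0.
by rewrite eq_sym ltn_eqF.
Qed.

Lemma section_std_pts m (U : seq 'rV[R]_m.+1) :
  (forall y : 'rV[R]_m,
     (exists x, in_aff U x /\ integral_pt x /\ proj x = y) <-> integral_pt y) ->
  exists x : 'I_m.+1 -> 'rV[R]_m.+1,
    forall i, [/\ in_aff U (x i), integral_pt (x i) & proj (x i) = std_pt i].
Proof.
move=> hU.
have hx i : exists x, [/\ in_aff U x, integral_pt x & proj x = std_pt i].
  suff /hU [x [? [? ?]]] : integral_pt (std_pt i) by exists x.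
  by move=> c; exists (c.+1 == i :> nat)%:Z; rewrite mxE; case: eqP.
exact: fin_all_exists hx.
Qed.

(* The integral affine form [x_(m+1) - c_0 - sum_j (c_j - c_0) x_j] interpolating
   the values [c_i] at the standard points. *)
Definition interp_form m (c : 'I_m.+1 -> int) : nat -> int := fun j =>
  if j == 0%N then - c ord0 else if (j < m.+1)%N then c ord0 - c (inord j) else 1.

Lemma interp_form_std m (c : 'I_m.+1 -> int) (x : 'I_m.+1 -> 'rV[R]_m.+1) :
  (forall i, proj (x i) = std_pt i) -> (forall i, coord (x i) m = (c i)%:~R) ->
  forall i, affine_form m.+1 (int_coef (interp_form c)) (x i) = 0.
Proof.
move=> hx hc i; rewrite /affine_form big_ord_recr /= hc /int_coef /interp_form /= ltnn.
have coord_x (j : 'I_m) : coord (x i) j = (j.+1 == i :> nat)%:R.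
  by rewrite -coord_proj // hx coord_std_pt.
under eq_bigr do rewrite coord_x ltnS ltn_ord.
have [i0|ip] := posnP i.
  rewrite big1 => [|j _]; last by rewrite i0 mulr0.
  by rewrite (_ : i = ord0); [ring | apply: val_inj].
have him : (i.-1 < m)%N by move: (ltn_ord i); lia.
rewrite (bigD1 (Ordinal him)) //= big1 => [|j hj].
  rewrite prednK // eqxx (_ : inord i = i).
    by rewrite intrN intrB mulr1 mul1r addr0 subrK addNr.
  by apply: val_inj; rewrite /= inordK.
case: eqP => [e|_]; last by rewrite mulr0.
by move: hj; rewrite -val_eqE /= -e eqxx.
Qed.

Definition ext_pt n (x : 'I_n.+1 -> 'rV[R]_n.+1) u (r : 'I_n.+2) : 'rV[R]_n.+1 :=
  if unlift ord_max r is Some j then x j else u.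

Lemma affine_form_eq0_of_det0 m (x : 'I_m.+1 -> 'rV[R]_m.+1) (b : nat -> R) u :
  (forall i, proj (x i) = std_pt i) -> b m.+1 = 1 ->
  (forall i, affine_form m.+1 b (x i) = 0) ->
  \det (hom_mx (ext_pt x u)) = 0 -> affine_form m.+1 b u = 0.
Proof.
move=> hx hb hbx hdet.
have := @cramer_last _ (hom_mx (ext_pt x u)) b ord_max (affine_form m.+1 b u).
rewrite hb hdet mulr0 cofactor_hom_mx_max.
have -> : hom_mx (fun j => proj (ext_pt x u (lift ord_max j))) = hom_mx (@std_pt m).
  by apply/matrixP => r c; rewrite !mxE /ext_pt liftK hx.
rewrite det_hom_mx_std_pt mulr1 => -> // r.
rewrite hom_mx_sum /ext_pt; case: unliftP => [j ->|->]; last by rewrite eqxx.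
by rewrite eq_sym (negbTE (neq_lift _ _)) hbx.
Qed.

(* Condition (b) yields integer points of [H_U] over the standard simplex of [R^m];
   the affine form interpolating their last coordinates is an integral equation of [H_U]. *)
Lemma integral_hyperplane_eqn m (U : seq 'rV[R]_m.+1) : size U = m.+1 ->
  (forall y : 'rV[R]_m,
     (exists x, in_aff U x /\ integral_pt x /\ proj x = y) <-> integral_pt y) ->
  exists b : nat -> int, b m.+1 = 1 /\
    forall u, u \in U -> affine_form m.+1 (int_coef b) u = 0.
Proof.
move=> hs /section_std_pts [x hx].
have [c hc] : exists c : 'I_m.+1 -> int, forall i, coord (x i) m = (c i)%:~R.
  suff hc i : exists z : int, coord (x i) m = z%:~R by exact: fin_all_exists hc.
  by have [_ hi _] := hx i; rewrite -[m]/(val (@ord_max m)) coordE; apply: hi.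
have hproj i : proj (x i) = std_pt i by have [] := hx i.
exists (interp_form c); split; first by rewrite /interp_form /= ltnn.
move=> u hu; apply: (affine_form_eq0_of_det0 hproj) => //.
  by rewrite /int_coef /interp_form /= ltnn.
  exact: interp_form_std.
apply: (@det_hom_mx_in_aff _ U); first by rewrite hs.
by move=> r; rewrite /ext_pt; case: unlift => [j|]; [have [] := hx j | exact: in_aff_mem].
Qed.

(* This also holds in the degenerate cases, thanks to [x / 0 = 0]. *)
Lemma ratio_intr_of_proportional (X Y X' Y' A : R) (lam : int) :
  X = A * Y -> lam%:~R * X' = A * Y' -> exists m : int, X / Y / (X' / Y') = m%:~R.
Proof.
move=> -> eX'.
have [->|hY] := eqVneq Y 0; first by exists 0; rewrite invr0 !mulr0 mul0r.
rewrite mulfK //.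
have [->|hY'] := eqVneq Y' 0; first by exists 0; rewrite invr0 mulr0 invr0 mulr0.
have [hl|hl] := eqVneq lam 0.
  move: eX'; rewrite hl mul0r => /esym /eqP; rewrite mulf_eq0 (negbTE hY') orbF.
  by move=> /eqP ->; exists 0; rewrite mul0r.
have hl' : (lam%:~R : R) != 0 by rewrite intr_eq0.
have -> : X' = A * Y' / lam%:~R by rewrite -eX' mulrC mulKf.
have [->|hA] := eqVneq A 0; first by exists 0; rewrite !mul0r.
by exists lam; field; rewrite hY' hl' hA.
Qed.

End HomogeneousCoordinates.

Arguments int_coef {R} b j /.

Section TruncatedSimplex.
Variable R : realFieldType.
Variable d : nat.
Variable v : 'I_d.+1 -> 'rV[R]_d.
Variable s : 'S_d.

(* The rows of [X(s,k)]: [v_(s 1), ..., v_(s k), v_(d+1)], numbered from [0]. *)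
Definition pt k (r : nat) : 'rV[R]_d := if (r < k)%N then vsig v s r else v ord_max.

Definition tpt k (r : 'I_k.+1) : 'rV[R]_k := trunc k (pt k r).
Arguments tpt : clear implicits.

Definition tpts (k : nat) : seq 'rV[R]_k := [seq tpt k r | r <- enum 'I_k.+1].

Definition facet_pts (k : nat) (i : 'I_k.+1) : seq 'rV[R]_k :=
  [seq tpt k (lift i j) | j <- enum 'I_k].

Lemma pt_max k : pt k k = v ord_max.
Proof. by rewrite /pt ltnn. Qed.

Lemma pt_lift k (j : 'I_k.+1) : pt k.+1 (lift (inord k) j) = pt k j.
Proof.
rewrite /pt /= /bump inordK //.
by case: (ltnP j k) => hjk /=; rewrite ltnS ?(ltnW hjk) // ltnNge hjk.
Qed.

Lemma Xmat_hom_mx k : Xmat v s k = hom_mx (tpt k).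
Proof.
apply/matrixP => r c; rewrite !mxE; case: ifP => // hc.
by rewrite /tpt coord_trunc //; move: (ltn_ord c) hc => /=; lia.
Qed.

Lemma Xmat_sum k (b : nat -> R) r : \sum_c Xmat v s k r c * b c = affine_form k b (pt k r).
Proof. by rewrite Xmat_hom_mx hom_mx_sum affine_form_trunc. Qed.

Lemma cofactor_Xmat_max k : cofactor (Xmat v s k) ord_max ord_max = \det (Ymat v s k).
Proof.
rewrite /cofactor sign_addnn mul1r; congr (\det _); apply/matrixP => r c.
by rewrite !mxE !lift_max ltn_ord.
Qed.

Lemma cofactor_Xmat_last k : cofactor (Xmat v s k.+1) (inord k) ord_max = - \det (Xmat v s k).
Proof.
rewrite /cofactor inordK // addnS exprS sign_addnn mulr1 mulN1r.
congr (- \det _); apply/matrixP => r c; rewrite !mxE lift_max /= /bump inordK //.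
by case: (ltnP r k) => hrk /=; rewrite ltnS ?(ltnW hrk) // ltnNge hrk.
Qed.

Lemma detX_cofactor k (b : nat -> R) (i : 'I_k.+1) :
  (forall r : 'I_k.+1, r != i -> affine_form k b (pt k r) = 0) ->
  b k * \det (Xmat v s k) = affine_form k b (pt k i) * cofactor (Xmat v s k) i ord_max.
Proof.
move=> hb; apply: cramer_last => r; rewrite Xmat_sum.
by have [->|/hb] := eqVneq r i.
Qed.

Lemma tpt_inj k : \det (Xmat v s k) != 0 -> injective (tpt k).
Proof. by rewrite Xmat_hom_mx; apply: hom_mx_inj. Qed.

Lemma facet_ptsP k (i : 'I_k.+1) : \det (Xmat v s k) != 0 ->
  [/\ uniq (facet_pts i), size (facet_pts i) = k & {subset facet_pts i <= tpts k}].
Proof.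
move=> hX; split.
- by rewrite map_inj_uniq ?enum_uniq // => a b /(tpt_inj hX) /lift_inj.
- by rewrite size_map size_enum_ord.
- by move=> x /mapP [j _ ->]; rewrite map_f // mem_enum.
Qed.

Definition truncated_lattice_face k := \det (Xmat v s k) != 0 /\
  exists S : seq 'rV[R]_k, lattice_face S /\ {subset tpts k <= S}.

(* [b] is an integral equation [x_k = l(x_1, ..., x_(k-1))] of the facet opposite [i]. *)
Definition integral_facets k := forall i : 'I_k.+1, exists b : nat -> int, b k = 1 /\
  forall r : 'I_k.+1, r != i -> affine_form k (int_coef b) (pt k r) = 0.

Lemma integral_facets_of k : truncated_lattice_face k.+1 -> integral_facets k.+1.
Proof.
case: k => [|n] [hX [S [hS hsub]]] i.
  move: hS => /= [_ [_ hint]].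
  have hin : tpt 1 (lift i ord0) \in S by apply: hsub; rewrite map_f ?mem_enum.
  have [z hz] := hint _ hin ord0.
  exists (fun n => if n == 0%N then - z else 1); split => // r.
  case: (unliftP i r) => [j ->|->]; last by rewrite eqxx.
  rewrite (ord1 j) -affine_form_trunc /affine_form big_ord1 /int_coef /= mul1r.
  by rewrite -[0%N]/(val (@ord0 0)) coordE hz intrN addNr.
move: hS => /= [_ hS]; have [hu hsz hsU] := facet_ptsP i hX.
have [_ /(integral_hyperplane_eqn hsz) [b [bm hb]]] :=
  hS _ hu hsz (fun x hx => hsub x (hsU x hx)).
exists b; split => // r; case: (unliftP i r) => [j ->|->]; last by rewrite eqxx.
by move=> _; rewrite -affine_form_trunc; apply: hb; apply: map_f; rewrite mem_enum.
Qed.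

Lemma truncated_lattice_face_pred n :
  truncated_lattice_face n.+2 -> truncated_lattice_face n.+1.
Proof.
move=> hQ; have hB := integral_facets_of hQ.
case: hQ => [hX [S [hS hsub]]]; move: hS => /= [_ hS].
pose i : 'I_n.+3 := inord n.+1.
have [hu hsz hsU] := facet_ptsP i hX.
have [ha _] := hS _ hu hsz (fun x hx => hsub x (hsU x hx)).
have [b [bm hb]] := hB i.
have hX1 : \det (Xmat v s n.+1) != 0.
  apply: contraNneq hX => h0; have := detX_cofactor hb.
  by rewrite /i cofactor_Xmat_last h0 oppr0 mulr0 /int_coef bm mul1r => ->.
have proj_facet : map (@proj R n.+1) (facet_pts i) = tpts n.+1.
  by rewrite -map_comp; apply: eq_map => j /=; rewrite /tpt pt_lift proj_trunc.
split => //; exists (tpts n.+1); split => //; apply: ha; rewrite proj_facet; split.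
  by rewrite map_inj_uniq ?enum_uniq //; apply: tpt_inj.
move=> p; split => [hp|[]] //; split => //; move: hp => /mapP [j _ ->].
by apply: hom_mx_not_in_conv; rewrite -Xmat_hom_mx.
Qed.

Lemma truncated_lattice_face_top : aff_indep v ->
  lattice_face [seq v i | i <- enum 'I_d.+1] -> truncated_lattice_face d.
Proof.
move=> hA hL; pose tau : {perm 'I_d.+1} := lift_perm ord_max ord_max s.
have pt_tau (r : 'I_d.+1) : tpt d r = v (tau r).
  rewrite /tpt trunc_id; case: (unliftP ord_max r) => [j ->|->].
    have hj : (j < d)%N := ltn_ord j.
    rewrite /tau lift_perm_lift /pt lift_max hj /vsig insubT /=.
    congr (v _); apply: val_inj; rewrite /= /bump leqNgt ltn_ord add0n.
    by congr (s _); apply: val_inj.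
  by rewrite /tau lift_perm_id pt_max.
split.
  have -> : Xmat v s d = row_perm tau (\matrix_(i < d.+1, j < d.+1)
          if j == 0 :> nat then 1 else coord (v i) j.-1).
    by apply/matrixP => r c; rewrite Xmat_hom_mx !mxE pt_tau.
  by rewrite row_permE det_mulmx det_perm mulf_neq0 ?signr_eq0.
exists [seq v i | i <- enum 'I_d.+1]; split => // x /mapP [j _ ->].
by rewrite pt_tau map_f // mem_enum.
Qed.

Lemma truncated_lattice_face_all k : aff_indep v ->
  lattice_face [seq v i | i <- enum 'I_d.+1] -> (0 < k <= d)%N -> truncated_lattice_face k.
Proof.
move=> hA hL /andP [hk0 hkd].
suff tlf_sub j : (j < d)%N -> truncated_lattice_face (d - j).
  by rewrite -(subKn hkd); apply: tlf_sub; lia.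
elim: j => [_|j IH hj]; first by rewrite subn0; apply: truncated_lattice_face_top.
have -> : (d - j.+1 = (d - j.+2).+1)%N by lia.
apply: truncated_lattice_face_pred.
by rewrite -(_ : d - j = (d - j.+2).+2)%N; [apply: IH | ]; lia.
Qed.

Lemma zfunE k : zfun v s k = \det (Xmat v s k) / \det (Ymat v s k).
Proof.
case: k => [|k] //=; rewrite det_mx00 divr1 (mx11_scalar (Xmat v s 0)) det_scalar1.
by rewrite mxE.
Qed.

Lemma zfun_ratio_int n : integral_facets n.+1 ->
  exists m : int, zfun v s n.+1 / zfun v s n = m%:~R.
Proof.
move=> hB; have [bH [bHm hH]] := hB ord_max; have [bG [bGm hG]] := hB (inord n).
have G_max : affine_form n.+1 (int_coef bG) (v ord_max) = 0.
  rewrite -(pt_max n.+1); apply: (hG ord_max).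
  by rewrite -val_eqE /= inordK // neq_ltn ltnSn orbT.
set t := affine_form n.+1 (int_coef bH) (v ord_max).
have eX : \det (Xmat v s n.+1) = t * \det (Ymat v s n.+1).
  by have := detX_cofactor hH; rewrite /int_coef bHm mul1r pt_max cofactor_Xmat_max.
pose bD : nat -> R := int_coef bH \- int_coef bG.
have bD_n1 : bD n.+1 = 0 by rewrite /bD /int_coef /= bHm bGm subrr.
have hD (r : 'I_n.+1) : r != ord_max -> affine_form n bD (pt n r) = 0.
  move=> hr; have hrn : (r < n)%N by move: hr (ltn_ord r); rewrite -val_eqE /=; lia.
  have -> : pt n r = pt n.+1 (widen_ord (leqnSn _) r) by rewrite /pt /= hrn ltnW.
  rewrite -affine_form_last0 // /bD affine_formB hH ?hG ?subr0 //.
    by rewrite -val_eqE /= inordK // neq_ltn hrn.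
  by rewrite -val_eqE /= neq_ltn ltnW.
have eX' : (bH n - bG n)%:~R * \det (Xmat v s n) = t * \det (Ymat v s n).
  have := detX_cofactor hD; rewrite pt_max cofactor_Xmat_max intrB => ->.
  by rewrite -affine_form_last0 // /bD affine_formB G_max subr0.
by rewrite !zfunE; apply: ratio_intr_of_proportional eX eX'.
Qed.

End TruncatedSimplex.

Theorem mainTheorem10 (R : realFieldType) (d : nat) (v : 'I_d.+1 -> 'rV[R]_d) :
  (1 <= d)%N ->
  aff_indep v ->
  lattice_face [seq v i | i <- enum 'I_d.+1] ->
  forall (s : 'S_d) (k : nat), (1 <= k <= d)%N ->
    exists m : int, zfun v s k / zfun v s k.-1 = m%:~R.
Proof.
move=> _ hA hL s [//|n] hk.
by apply/zfun_ratio_int/integral_facets_of/truncated_lattice_face_all.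
Qed.
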